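(* Let $\vec d=(\vec a,\vec b)$ be a bidegree sequence of length $n$ with $\sum_i a_i=\sum_i b_i=n\bar c$ and $m:=\min\vec d\in[1..n]$. Define $k_*=m+\sqrt{m^2+n(\bar c-2m)}$, and let $k=\lceil k_*\rceil$ if $m^2+n(\bar c-2m)\ge0$ (i.e. $k_*$ is real) and $k=1$ otherwise. If $$\max\vec d\le\min\Big(\Big\lfloor n\frac{\bar c-m}{k}+m\Big\rfloor,\ n\Big),$$ then $\vec d$ is graphic with loops.
   Context: A bidegree sequence of length $n$ is a pair $\vec d=(\vec a,\vec b)$ with $\vec a=(a_1,\dots,a_n)\in\mathbb{N}_0^n$ and $\vec b=(b_1,\dots,b_n)\in\mathbb{N}_0^n$. It is graphic with loops if there is an $n\times n$ matrix with entries in $\{0,1\}$ whose $i$th row sum is $a_i$ and whose $i$th column sum is $b_i$ for every $i\in[1..n]$; it is graphic if such a matrix exists with all diagonal entries equal to $0$. $\max\vec d$ and $\min\vec d$ denote the maximum and minimum over all $2n$ entries $a_1,\dots,a_n,b_1,\dots,b_n$. The number $\bar c$ (the average degree) is defined by $\sum_i a_i=\sum_i b_i=n\bar c$. For integers $a\le b$, $[a..b]:=\{x\in\mathbb{Z}:a\le x\le b\}$. *)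

From HB Require Import structures.
From mathcomp Require Import all_boot all_order all_algebra.
Set Implicit Arguments. Unset Strict Implicit. Unset Printing Implicit Defensive.
Import Order.TTheory GRing.Theory Num.Theory.

Definition bideg_entries (n : nat) (a b : 'I_n -> nat) : seq nat :=
  [seq a i | i <- enum 'I_n] ++ [seq b i | i <- enum 'I_n].

Definition maxd (n : nat) (a b : 'I_n -> nat) : nat :=
  \max_(x <- bideg_entries a b) x.

(* min d : minimum over all 2n entries (the neutral element maxd makes this
   the true minimum whenever n >= 1) *)
Definition mind (n : nat) (a b : 'I_n -> nat) : nat :=
  \big[minn/maxd a b]_(x <- bideg_entries a b) x.

Definition graphic_with_loops (n : nat) (a b : 'I_n -> nat) : Prop :=
  exists M : 'M[nat]_n,
    (forall i j, M i j <= 1) /\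
    (forall i, \sum_(j < n) M i j = a i) /\
    (forall j, \sum_(i < n) M i j = b j).

(* A 0/1 matrix with row sums [a] and column sums [b] exists as soon as every
   cut is feasible: for each set [S] of rows and [T] of columns,
   [sum_(i in S) a i <= |S| |T| + sum_(j notin T) b j].  Sufficiency follows by
   filling the columns one at a time, putting the ones of the last column into
   the rows of largest remaining degree.  When all degrees lie in [[m..M]] and
   sum to [N], both sides of a cut are bounded by expressions in [s = |S|] and
   [t = |T|] alone, and comparing them is a quadratic problem in [(s, t)]; it is
   solved exactly when [(M - m) sqrt (m ^ 2 + N - 2 n m) <= N - n m - m (M - m)],
   which is what the bound on [max d] in terms of [k >= k_*] guarantees. *)

From HB Require Import structures.
From mathcomp Require Import all_boot all_order all_algebra.
From mathcomp Require Import zify ring lra.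
Set Implicit Arguments. Unset Strict Implicit. Unset Printing Implicit Defensive.
Import Order.TTheory GRing.Theory Num.Theory.

Lemma exists_subset_of_largest (I : finType) (f : I -> nat) (A : {set I}) k :
  k <= #|A| -> exists P : {set I},
    [/\ P \subset A, #|P| = k &
        forall i j, i \in P -> j \in A :\: P -> f j <= f i].
Proof.
elim: k => [|k IH] hk.
  by exists set0; rewrite sub0set cards0; split => // i j; rewrite inE.
have [P [sPA cP topP]] := IH (ltnW hk).
have /card_gt0P[x0 Ax0] : 0 < #|A :\: P| by rewrite cardsD (setIidPr sPA) cP subn_gt0.
have [x /setDP[Ax Px] xmax] := arg_maxnP f Ax0.
exists (x |: P); split.
- by rewrite subUset sub1set Ax.
- by rewrite cardsU1 Px cP.
- move=> i j /setU1P[->|iP] /setDP[Aj]; rewrite inE negb_or => /andP[jx jP].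
    by apply: xmax; apply/setDP.
  by apply: topP => //; apply/setDP.
Qed.

Section CutCondition.

Variable I : finType.

(* Columns are indexed by [nat] so that the column set [T] of a cut is the same
   predicate for every number [c] of columns, which makes induction on [c] easy. *)
Definition cut_condition (c : nat) (a : I -> nat) (b : nat -> nat) :=
  forall (S : {set I}) (T : pred nat),
    \sum_(i in S) a i <= #|S| * \sum_(j < c | T j) 1 + \sum_(j < c | ~~ T j) b j.

Lemma cut_condition_succ c a b (S : {set I}) (T : pred nat) (x : bool) :
  cut_condition c.+1 a b ->
  \sum_(i in S) a i <= #|S| * (\sum_(j < c | T j) 1 + x)
                        + \sum_(j < c | ~~ T j) b j + (if x then 0 else b c).
Proof.
have split_last (U : pred bool) (F : nat -> nat) :
    \sum_(j < c.+1 | U (if j == c :> nat then x else T j)) F j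
    = \sum_(j < c | U (T j)) F j + (if U x then F c else 0).
  rewrite big_mkcond big_ord_recr /= eqxx -big_mkcond; congr (_ + _).
  by apply: eq_bigl => j; rewrite ltn_eqF.
move=> /(_ S (fun j => if j == c then x else T j)).
move: (split_last id (fun=> 1)) (split_last negb b) => /= -> ->.
by case: x {split_last} => /=; rewrite ?addn0 ?addn1 -?addnA.
Qed.

Section RemoveColumn.

Variables (c : nat) (a : I -> nat) (b : nat -> nat) (P : {set I}).
Hypotheses (cut : cut_condition c.+1 a b) (cardP : #|P| = b c).
Hypothesis P_gt0 : forall i, i \in P -> 0 < a i.
Hypothesis P_top : forall i j, i \in P -> j \notin P -> a j <= a i.

Lemma sum_remove_column (S : {set I}) :
  \sum_(i in S) (a i - (i \in P)) + #|S :&: P| = \sum_(i in S) a i.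
Proof.
rewrite -sum1_card (big_setID (A := S) P (fun i => a i - _)) (big_setID (A := S) P a) /=.
rewrite addnAC -big_split /=; congr (_ + _).
  by apply: eq_bigr => i /setIP[_ iP]; rewrite iP subnK // P_gt0.
by apply: eq_bigr => i /setDP[_ /negbTE ->]; rewrite subn0.
Qed.

Lemma cut_condition_remove_column : cut_condition c (fun i => a i - (i \in P)) b.
Proof.
move=> S T; set t := \sum_(j < c | T j) 1; set r := \sum_(j < c | ~~ T j) b j.
have := sum_remove_column S; have := cardsID P S.
have [/exists_inP[x /setDP[xP xS] axt]|/exists_inPn large] :=
  boolP [exists x in P :\: S, a x <= t].
- have := cut_condition_succ (S :&: P) T true cut; rewrite -/t -/r addn0.
  have : \sum_(i in S :\: P) a i <= #|S :\: P| * t.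
    rewrite -sum_nat_const; apply: leq_sum => i /setDP[iS iP].
    by apply: leq_trans axt; apply: P_top.
  rewrite [\sum_(i in S) (_ - _)](big_setID P) /=.
  have -> : \sum_(i in S :\: P) (a i - (i \in P)) = \sum_(i in S :\: P) a i.
    by apply: eq_bigr => i /setDP[_ /negbTE ->]; rewrite subn0.
  have := sum_remove_column (S :&: P); rewrite -setIA setIid.
  nia.
- have := cut_condition_succ (S :|: P) T false cut; rewrite -/t -/r addn0.
  have -> : \sum_(i in S :|: P) a i = \sum_(i in S) a i + \sum_(i in P :\: S) a i.
    by rewrite (big_setID S) /= setIUl setIid (setUidPl (subsetIr P S)) setDUl setDv set0U.
  have : #|P :\: S| * t.+1 <= \sum_(i in P :\: S) a i.
    by rewrite -sum_nat_const; apply: leq_sum => i /large; rewrite -ltnNge.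
  have := cardsID S P; have := cardsUI S P; rewrite [P :&: S]setIC cardP; nia.
Qed.

End RemoveColumn.

Lemma cut_condition_realizable c (a : I -> nat) (b : nat -> nat) :
  \sum_i a i = \sum_(j < c) b j -> cut_condition c a b ->
  exists F : I -> nat -> nat,
    [/\ forall i j, F i j <= 1, forall i, \sum_(j < c) F i j = a i
       & forall j, j < c -> \sum_i F i j = b j].
Proof.
have sum_setT (F : I -> nat) : \sum_(i in [set: I]) F i = \sum_i F i.
  by apply: eq_bigl => i; rewrite in_setT.
elim: c a => [|c IH] a sum_ab cut.
  exists (fun _ _ => 0); split=> // i; rewrite big_ord0; apply/esym/eqP.
  by move: sum_ab; rewrite big_ord0 => /eqP; rewrite sum_nat_eq0 => /forall_inP/(_ i isT).
(* Fill the last column with [b c] rows of largest [a]; they all have [a > 0]. *)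
set Z := [set i | 0 < a i].
have bcZ : b c <= #|Z|.
  have := cut_condition_succ Z pred0 true cut; rewrite big_pred0_eq.
  have -> : \sum_(i in Z) a i = \sum_(j < c.+1) b j.
    rewrite -sum_ab -sum_setT [RHS](big_setID Z) /= setTI [X in _ + X]big1 ?addn0 // => i.
    by rewrite !inE lt0n negbK andbT => /eqP.
  by rewrite big_ord_recr /= add0n muln1 addn0 addnC leq_add2r.
have [P [PZ cardP P_top]] := exists_subset_of_largest a bcZ.
have P_gt0 i : i \in P -> 0 < a i by move/(subsetP PZ); rewrite inE.
have P_top' i j : i \in P -> j \notin P -> a j <= a i.
  move=> iP jP; have [jZ|] := boolP (j \in Z); first by apply: P_top => //; apply/setDP.
  by rewrite inE -eqn0Ngt => /eqP ->.
have sum_ab' : \sum_i (a i - (i \in P)) = \sum_(j < c) b j.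
  apply/(@addIn (b c)); move: sum_ab; rewrite big_ord_recr /= => <-.
  by rewrite -cardP -!sum_setT -{2}(setTI P); apply: sum_remove_column.
have [F [F01 F_row F_col]] := IH _ sum_ab' (cut_condition_remove_column cut cardP P_gt0 P_top').
exists (fun i j => if j == c then (i \in P : nat) else F i j); split.
- by move=> i j; case: (j == c) => //; case: (i \in P).
- move=> i; rewrite big_ord_recr /= eqxx.
  under eq_bigr => j _ do rewrite (ltn_eqF (ltn_ord j)).
  rewrite F_row; case: (boolP (i \in P)) => [/P_gt0 ai_gt0|_].
    by rewrite addn1 subn1 prednK.
  by rewrite subn0 addn0.
- move=> j; rewrite ltnS leq_eqVlt => /orP[/eqP ->|jc]; last by rewrite ltn_eqF ?F_col.
  by rewrite eqxx -cardP -sum1_card [RHS]big_mkcond.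
Qed.

End CutCondition.

Local Open Scope ring_scope.

Section CutBound.

Variables n m M N : int.
Hypotheses (m_ge1 : 1 <= m) (mM : m <= M) (Mn : M <= n).
Hypotheses (N_ge : n * m <= N) (N_le : N <= n * M).

(* [disc] is the radicand [m ^ 2 + n (cbar - 2 m)] of [k_*], and [disc_condition]
   is the integer form of [(M - m) sqrt disc <= excess]. *)
Definition disc : int := m * m + N - 2 * n * m.
Definition excess : int := N - n * m - m * (M - m).

Definition disc_condition : Prop :=
  disc < 0 \/ 0 <= excess /\ disc * ((M - m) * (M - m)) <= excess * excess.

Lemma disc_condition_sqr :
  disc_condition -> disc * ((M - m) * (M - m)) <= excess * excess.
Proof.
rewrite /disc_condition => -[disc_lt0|[_ //]].
apply: (@le_trans _ _ 0); last by rewrite -expr2 sqr_ge0.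
by rewrite nmulr_rle0 // mulr_ge0 // subr_ge0.
Qed.

(* For [s] rows and [t] columns with degrees in [[m..M]] summing to [N], the
   row side of a cut is at most [s M] and [N - (n - s) m], while the column side
   is at least [s t + (n - t) m] and [s t + N - t M]. *)
Definition cut_bound (s t : int) : Prop :=
  [\/ s * M <= s * t + (n - t) * m, s * M <= s * t + N - t * M,
      N - (n - s) * m <= s * t + (n - t) * m | N - (n - s) * m <= s * t + N - t * M].

Variables s t : int.
Hypotheses (s_ge0 : 0 <= s) (s_le : s <= n) (t_ge0 : 0 <= t) (t_le : t <= n).

Lemma cut_bound_boundary : ~~ (m < s < M) || ~~ (m < t < M) -> cut_bound s t.
Proof.
move=> boundary.
have [Mt|tM] := lerP M t.
  constructor 1.
  have : 0 <= s * (t - M) by apply: mulr_ge0; lia.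
  have : 0 <= (n - t) * m by apply: mulr_ge0; lia.
  lia.
have [tm|mt] := lerP t m.
  constructor 4.
  have [sM|Ms] := lerP s M.
    have : 0 <= (m - t) * (M - s) by apply: mulr_ge0; lia.
    have : 0 <= m * (n - M) by apply: mulr_ge0; lia.
    lia.
  have : 0 <= t * (s - M) by apply: mulr_ge0; lia.
  have : 0 <= m * (n - s) by apply: mulr_ge0; lia.
  lia.
have [sm|ms] := lerP s m.
  constructor 1.
  have : 0 <= (m - s) * (M - t) by apply: mulr_ge0; lia.
  have : 0 <= m * (n - M) by apply: mulr_ge0; lia.
  lia.
have [Ms|sM] := lerP M s.
  constructor 4.
  have : 0 <= t * (s - M) by apply: mulr_ge0; lia.
  have : 0 <= m * (n - s) by apply: mulr_ge0; lia.
  lia.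
by move: boundary; rewrite ms sM mt tM.
Qed.

Section Interior.

Hypotheses (ms : m < s) (sM : s < M) (mt : m < t) (tM : t < M).

Let scale_nonneg (X : int) : 0 <= (M - m) * (M - m) * X -> 0 <= X.
Proof. by rewrite pmulr_rge0 // mulr_gt0 // subr_gt0 (lt_trans ms). Qed.

(* The four interior cases are split by the signs of [s (M - m) - (N - n m)]
   and [t (M - m) - (N - n m)]; each target inequality is multiplied by
   [(M - m) ^ 2] and obtained as a sum of nonnegative products. *)
Lemma cut_bound_le_le :
  disc_condition -> s * (M - m) <= N - n * m -> t * (M - m) <= N - n * m ->
  cut_bound s t.
Proof.
move/disc_condition_sqr; rewrite /disc /excess => disc_sqr hs ht; constructor 2.
suff : 0 <= (M - m) * (M - m) * (s * t + N - t * M - s * M) by move/scale_nonneg; lia.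
have : 0 <= (N - n * m - s * (M - m)) * (M - t) * (M - m).
  by apply: mulr_ge0; [apply: mulr_ge0|]; lia.
have [hMd|hMd] := lerP (M * (M - m)) (N - n * m).
  have : 0 <= (t - m) * (N - n * m - M * (M - m)) * (M - m).
    by apply: mulr_ge0; [apply: mulr_ge0|]; lia.
  have : 0 <= m * (M - m) * (n - M) * (M - m).
    by apply: mulr_ge0; [apply: mulr_ge0; [apply: mulr_ge0|]|]; lia.
  lia.
have : 0 <= (N - n * m - t * (M - m)) * (M * (M - m) - (N - n * m)).
  by apply: mulr_ge0; lia.
lia.
Qed.

Lemma cut_bound_le_gt :
  disc_condition -> s * (M - m) <= N - n * m -> N - n * m < t * (M - m) ->
  cut_bound s t.
Proof.
move/disc_condition_sqr; rewrite /disc /excess => disc_sqr hs ht; constructor 1.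
suff : 0 <= (M - m) * (M - m) * (s * t + (n - t) * m - s * M) by move/scale_nonneg; lia.
have : 0 <= (N - n * m - s * (M - m)) * (M - t) * (M - m).
  by apply: mulr_ge0; [apply: mulr_ge0|]; lia.
have [hmd|hmd] := lerP (N - n * m) (m * (M - m)).
  have : 0 <= (M - t) * (m * (M - m) - (N - n * m)) * (M - m).
    by apply: mulr_ge0; [apply: mulr_ge0|]; lia.
  have : 0 <= m * (M - m) * (n - M) * (M - m).
    by apply: mulr_ge0; [apply: mulr_ge0; [apply: mulr_ge0|]|]; lia.
  lia.
have : 0 <= (t * (M - m) - (N - n * m)) * ((N - n * m) - m * (M - m)).
  by apply: mulr_ge0; lia.
lia.
Qed.

Lemma cut_bound_gt_le :
  disc_condition -> N - n * m < s * (M - m) -> t * (M - m) <= N - n * m ->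
  cut_bound s t.
Proof.
move/disc_condition_sqr; rewrite /disc /excess => disc_sqr hs ht; constructor 4.
suff : 0 <= (M - m) * (M - m) * (s * t + N - t * M - (N - (n - s) * m)).
  by move/scale_nonneg; lia.
have : 0 <= (N - n * m - t * (M - m)) * (M - s) * (M - m).
  by apply: mulr_ge0; [apply: mulr_ge0|]; lia.
have [hmd|hmd] := lerP (N - n * m) (m * (M - m)).
  have : 0 <= (M - s) * (m * (M - m) - (N - n * m)) * (M - m).
    by apply: mulr_ge0; [apply: mulr_ge0|]; lia.
  have : 0 <= m * (M - m) * (n - M) * (M - m).
    by apply: mulr_ge0; [apply: mulr_ge0; [apply: mulr_ge0|]|]; lia.
  lia.
have : 0 <= (s * (M - m) - (N - n * m)) * ((N - n * m) - m * (M - m)).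
  by apply: mulr_ge0; lia.
lia.
Qed.

(* Here [(s - m) (t - m) > excess ^ 2 / (M - m) ^ 2 >= disc]. *)
Lemma cut_bound_gt_gt :
  disc_condition -> N - n * m < s * (M - m) -> N - n * m < t * (M - m) ->
  cut_bound s t.
Proof.
rewrite /disc_condition /disc /excess => dc hs ht; constructor 3.
suff : 0 <= (M - m) * (M - m) * (s * t + (n - t) * m - (N - (n - s) * m)).
  by move/scale_nonneg; lia.
case: dc => [disc_lt0|[excess_ge0 disc_le]].
  have : 0 <= (s - m) * (t - m) * ((M - m) * (M - m)).
    by apply: mulr_ge0; [apply: mulr_ge0|apply: mulr_ge0]; lia.
  have : 0 <= (- (m * m + N - 2 * n * m)) * ((M - m) * (M - m)).
    by apply: mulr_ge0; [lia|apply: mulr_ge0; lia].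
  lia.
have : 0 <= ((s - m) * (M - m) - (N - n * m - m * (M - m))) * ((t - m) * (M - m)).
  by apply: mulr_ge0; lia.
have : 0 <= (N - n * m - m * (M - m)) * ((t - m) * (M - m) - (N - n * m - m * (M - m))).
  by apply: mulr_ge0; lia.
lia.
Qed.

Lemma cut_bound_interior : disc_condition -> cut_bound s t.
Proof.
move=> dc; have [hs|hs] := lerP (s * (M - m)) (N - n * m);
  have [ht|ht] := lerP (t * (M - m)) (N - n * m).
- exact: cut_bound_le_le.
- exact: cut_bound_le_gt.
- exact: cut_bound_gt_le.
- exact: cut_bound_gt_gt.
Qed.

End Interior.

Lemma cut_bound_of_disc : disc_condition -> cut_bound s t.
Proof.
move=> dc; have [/andP[ms sM]|] := boolP (m < s < M); last first.
  by move=> s_out; apply: cut_bound_boundary; rewrite s_out.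
have [/andP[mt tM]|t_out] := boolP (m < t < M); last first.
  by apply: cut_bound_boundary; rewrite t_out orbT.
exact: cut_bound_interior.
Qed.

End CutBound.

Lemma disc_condition_of_floor_bound (R : archiRcfType) (n m M N : nat) :
  (0 < n)%N -> (0 < m)%N -> (m <= M)%N ->
  let cbar : R := N%:R / n%:R in
  let D : R := m%:R ^+ 2 + n%:R * (cbar - 2 * m%:R) in
  let k : int := if 0 <= D then Num.ceil (m%:R + Num.sqrt D) else 1%Z in
  M%:Z <= Num.floor (n%:R * (cbar - m%:R) / k%:~R + m%:R) ->
  disc_condition n m M N.
Proof.
move=> n_gt0 m_gt0 mM cbar D k M_le; rewrite /disc_condition /disc /excess.
have n_neq0 : (n%:R : R) != 0 by rewrite pnatr_eq0 -lt0n.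
have D_int : D = (m%:Z * m%:Z + N%:Z - 2 * n%:Z * m%:Z)%:~R.
  by rewrite /D /cbar !(intrD, intrM, intrB) /=; field.
have [D_ge0|] := lerP 0 D; last by left; rewrite -(ltr_int R) -D_int.
right; move: M_le; rewrite /k D_ge0 /=.
set q := Num.sqrt D; set kk := Num.ceil _ => M_le.
have q_ge0 : 0 <= q by apply: sqrtr_ge0.
have qq : q ^+ 2 = D by apply: sqr_sqrtr.
have k_ge : m%:R + q <= (kk%:~R : R) by apply: ceil_ge.
have m_ge1 : 1 <= (m%:R : R) by rewrite ler1n.
have mM' : (m%:R : R) <= M%:R by rewrite ler_nat.
(* [M - m <= (N - n m) / k] with [k >= m + sqrt D] gives [(M - m) sqrt D <= excess]. *)
have Mk : ((M%:R : R) - m%:R) * kk%:~R <= N%:R - n%:R * m%:R.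
  have : (M%:R : R) <= (N%:R - n%:R * m%:R) / kk%:~R + m%:R.
    rewrite -(ler_int R) in M_le; apply: le_trans M_le _.
    by rewrite (_ : _ * (_ - _) = N%:R - n%:R * m%:R) ?floor_le // /cbar; field.
  by rewrite -lerBlDr ler_pdivlMr; lra.
have qE : q * (M%:R - m%:R) <= (N%:R : R) - n%:R * m%:R - m%:R * (M%:R - m%:R).
  have : 0 <= ((kk%:~R : R) - m%:R - q) * (M%:R - m%:R) by apply: mulr_ge0; lra.
  nra.
have : 0 <= q * (M%:R - m%:R) by apply: mulr_ge0; lra.
split; rewrite -(ler_int R) !(intrD, intrM, intrB) /=; first lra.
rewrite D_int !(intrD, intrM, intrB) /= in qq; rewrite -qq; nra.
Qed.

Local Close Scope ring_scope.

Lemma cut_condition_of_degree_bounds (I : finType) (n m M : nat)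
    (a : I -> nat) (b : nat -> nat) :
  #|I| = n -> 0 < m -> m <= M -> M <= n ->
  (forall i, m <= a i <= M) -> (forall j, j < n -> m <= b j <= M) ->
  \sum_i a i = \sum_(j < n) b j ->
  disc_condition n m M (\sum_i a i) ->
  cut_condition n a b.
Proof.
move=> cardI m_gt0 mM Mn a_bd b_bd sum_ab dc S T.
set N := \sum_i a i in dc *; set s := #|S|.
set t := \sum_(j < n | T j) 1; set t' := \sum_(j < n | ~~ T j) 1.
set r := \sum_(j < n | ~~ T j) b j.
have aS_le : \sum_(i in S) a i <= s * M.
  by rewrite -sum_nat_const; apply: leq_sum => i _; case/andP: (a_bd i).
have aS_le' : \sum_(i in S) a i + (n - s) * m <= N.
  have -> : n - s = #|~: S| by rewrite -cardI -(cardsC S) addKn.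
  rewrite [N](bigID (mem S)) /= leq_add2l -sum_nat_const.
  rewrite (eq_bigl (fun i => i \notin S)) => [|i]; last by rewrite inE.
  by apply: leq_sum => i _; case/andP: (a_bd i).
have tt' : t + t' = n.
  rewrite -[RHS](card_ord n) -sum1_card [RHS](bigID (fun j : 'I_n => T j)) /=.
  by congr (_ + _); apply: eq_bigl.
have r_ge : t' * m <= r.
  rewrite /t' big_distrl /=; apply: leq_sum => j _; rewrite mul1n.
  by case/andP: (b_bd j (ltn_ord j)).
have r_ge' : N <= t * M + r.
  rewrite /N sum_ab (bigID (fun j : 'I_n => T j)) /= leq_add2r /t big_distrl /=.
  by apply: leq_sum => j _; rewrite mul1n; case/andP: (b_bd j (ltn_ord j)).
have s_le : s <= n by rewrite -cardI max_card.
have N_ge : n * m <= N.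
  by rewrite -cardI -sum_nat_const; apply: leq_sum => i _; case/andP: (a_bd i).
have N_le : N <= n * M.
  by rewrite -cardI -sum_nat_const; apply: leq_sum => i _; case/andP: (a_bd i).
have := @cut_bound_of_disc n m M N ltac:(lia) ltac:(lia) ltac:(lia) ltac:(lia) ltac:(lia)
  s t ltac:(lia) ltac:(lia) ltac:(lia) ltac:(lia) dc.
case; nia.
Qed.

Lemma bigmin_le (l : seq nat) z x : x \in l -> \big[minn/z]_(y <- l) y <= x.
Proof.
elim: l => [|y l IH] //; rewrite inE big_cons => /orP[/eqP ->|xl].
  exact: geq_minl.
exact: leq_trans (geq_minr _ _) (IH xl).
Qed.

Lemma bideg_entry_bounds n (a b : 'I_n -> nat) x :
  x \in bideg_entries a b -> mind a b <= x <= maxd a b.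
Proof.
move=> x_in; rewrite bigmin_le //=.
exact: (@leq_bigmax_seq _ _ xpredT id x).
Qed.

Lemma bideg_entries_row n (a b : 'I_n -> nat) i : a i \in bideg_entries a b.
Proof. by rewrite mem_cat map_f ?mem_enum. Qed.

Lemma bideg_entries_col n (a b : 'I_n -> nat) i : b i \in bideg_entries a b.
Proof. by rewrite mem_cat orbC map_f ?mem_enum. Qed.

Theorem theorem5 (R : archiRcfType) (n : nat) (a b : 'I_n -> nat) :
  \sum_(i < n) a i = \sum_(i < n) b i ->
  let m : nat := mind a b in
  (1 <= m <= n)%N ->
  let cbar : R := ((\sum_(i < n) a i)%:R / n%:R)%R in
  let D : R := ((m%:R) ^+ 2 + n%:R * (cbar - 2 * m%:R))%R in
  let k : int := if (0 <= D)%R then Num.ceil (m%:R + Num.sqrt D)%R else 1%Z in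
  ((maxd a b)%:Z <= Num.floor (n%:R * (cbar - m%:R) / k%:~R + m%:R))%R ->
  (maxd a b <= n)%N ->
  graphic_with_loops a b.
Proof.
case: n a b => [|n] a b sum_ab m /andP[m_gt0 m_le] cbar D k M_le Mn.
  by move: (leq_trans m_gt0 m_le).
have a_bd i : m <= a i <= maxd a b by apply/bideg_entry_bounds/bideg_entries_row.
pose bn j := b (inord j).
have bn_bd j : j < n.+1 -> m <= bn j <= maxd a b.
  by move=> _; apply/bideg_entry_bounds/bideg_entries_col.
have mM : m <= maxd a b by case/andP: (a_bd ord0) => /leq_trans; apply.
have dc := disc_condition_of_floor_bound (isT : 0 < n.+1) m_gt0 mM M_le.
have sum_abn : \sum_i a i = \sum_(j < n.+1) bn j.
  by rewrite sum_ab; apply: eq_bigr => j _; rewrite /bn inord_val.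
have cut := cut_condition_of_degree_bounds (card_ord _) m_gt0 mM Mn a_bd bn_bd sum_abn dc.
have [F [F01 F_row F_col]] := cut_condition_realizable sum_abn cut.
exists (\matrix_(i, j) F i j)%R; split; [|split]=> [i j|i|j]; rewrite ?mxE //.
  by rewrite -F_row; apply: eq_bigr => j _; rewrite mxE.
have -> : b j = bn j by rewrite /bn inord_val.
by rewrite -F_col //; apply: eq_bigr => i _; rewrite mxE.
Qed.
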